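(* Let $n\ge 2$ and let $\mathcal{A}(L_n)=\{(x,y)\in L_n\times L_n: y\le x\}\setminus\{(0,0)\}$, ordered componentwise. Then $\operatorname{Der}(L_n)$ with pointwise order is a lattice (with pointwise $\vee$ and $\wedge$), and the map $(x,y)\mapsto (d_x)^y$ is a lattice isomorphism from $\mathcal{A}(L_n)$ onto $\operatorname{Der}(L_n)$, where $(d_x)^y(1)=y$ and $(d_x)^y(z)=x\odot z$ for $z\ne 1$.
   Context: An MV-algebra is an algebra $(A,\oplus,{}^*,0)$ of type $(2,1,0)$ satisfying the usual axioms; $1=0^*$, $x\odot y=(x^*\oplus y^* )^*$, natural order $x\le y$ iff $x^*\oplus y=1$, $x\vee y=(x\odot y^* )\oplus y$, $x\wedge y=x\odot(x^*\oplus y)$. A $(\odot,\vee)$-derivation on $A$ is a map $d:A\to A$ with $d(x\odot y)=(d(x)\odot y)\vee(x\odot d(y))$ for all $x,y\in A$; $\operatorname{Der}(A)$ is the set of these, ordered by $d\preceq d'$ iff $d(x)\le d'(x)$ for all $x$. $L_n=\{0,\frac1{n-1},\dots,\frac{n-2}{n-1},1\}$ with $x\oplus y=\min\{1,x+y\}$, $x^*=1-x$, $x\odot y=\max\{0,x+y-1\}$. *)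

From mathcomp Require Import all_boot.
Unset Printing Implicit Defensive.

(* The MV-chain L_n = {0, 1/(n-1), ..., (n-2)/(n-1), 1}, encoded by numerators:
   the element k/(n-1) is represented by the ordinal k : 'I_(n.-1).+1. *)
Definition Ln (n : nat) := 'I_(n.-1).+1.

Section MV.
Variable n : nat.
Local Notation m := n.-1.

Definition mv_zero : Ln n := ord0.
Definition mv_one : Ln n := ord_max.
Definition mv_oplus (x y : Ln n) : Ln n := inord (minn (x + y) m).
Definition mv_neg (x : Ln n) : Ln n := inord (m - x).
Definition mv_odot (x y : Ln n) : Ln n := mv_neg (mv_oplus (mv_neg x) (mv_neg y)).
Definition mv_le (x y : Ln n) : Prop := mv_oplus (mv_neg x) y = mv_one.
Definition mv_join (x y : Ln n) : Ln n := mv_oplus (mv_odot x (mv_neg y)) y.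
Definition mv_meet (x y : Ln n) : Ln n := mv_odot x (mv_oplus (mv_neg x) y).

Definition is_der (d : Ln n -> Ln n) : Prop :=
  forall x y, d (mv_odot x y) = mv_join (mv_odot (d x) y) (mv_odot x (d y)).

Definition der_le (d d' : Ln n -> Ln n) : Prop := forall x, mv_le (d x) (d' x).

Definition inA (p : Ln n * Ln n) : Prop :=
  mv_le p.2 p.1 /\ p <> (mv_zero, mv_zero).
Definition pair_le (p q : Ln n * Ln n) : Prop := mv_le p.1 q.1 /\ mv_le p.2 q.2.
Definition pair_join (p q : Ln n * Ln n) : Ln n * Ln n :=
  (mv_join p.1 q.1, mv_join p.2 q.2).
Definition pair_meet (p q : Ln n * Ln n) : Ln n * Ln n :=
  (mv_meet p.1 q.1, mv_meet p.2 q.2).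

Definition dxy (p : Ln n * Ln n) : Ln n -> Ln n :=
  fun z => if z == mv_one then p.2 else mv_odot p.1 z.

Definition pjoin (d1 d2 : Ln n -> Ln n) : Ln n -> Ln n := fun z => mv_join (d1 z) (d2 z).
Definition pmeet (d1 d2 : Ln n -> Ln n) : Ln n -> Ln n := fun z => mv_meet (d1 z) (d2 z).
End MV.

From mathcomp Require Import all_boot zify.
Set Implicit Arguments.

(* Encode the element k/(n-1) of L_n by its numerator k, and write m = n - 1.
   In these coordinates the MV-operations become truncated arithmetic:
   x^* = m - x, x (+) y = min(x + y, m), x (.) y = x + y - m (truncated),
   join = max, meet = min, and the natural order is <= on numerators.

   1. For every pair (a, b) with b <= a the map (d_a)^b is a derivation
      (a case check on whether the arguments equal 1).
   2. Conversely, a derivation d is determined by e = d(c) on the coatom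
      c = (m-1)/m and by d(1): iterating z |-> z (.) c from the top gives
      d((m-j)/m) = e + 1 - j for 0 < j <= m, and the derivation identity at (0,0)
      and (1,c) yields e + 1 <= m and d(1) <= e + 1, so d = (d_{e+1})^{d(1)}.
   3. On A(L_n) the parametrization (x, y) |-> (d_x)^y is injective, is an
      order embedding, and sends componentwise join/meet to pointwise
      join/meet; with 2. this shows Der(L_n) is closed under pointwise
      join/meet, which are then its lattice operations. *)

Section ChainArithmetic.
Variable n : nat.
Local Notation m := n.-1.
Implicit Types x y z : Ln n.

Lemma val_zero : nat_of_ord (mv_zero n) = 0. Proof. by []. Qed.
Lemma val_one : nat_of_ord (mv_one n) = m. Proof. by []. Qed.

Lemma val_neg x : nat_of_ord (mv_neg n x) = m - x.
Proof. by rewrite /mv_neg inordK //; lia. Qed.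

Lemma val_oplus x y : nat_of_ord (mv_oplus n x y) = minn (x + y) m.
Proof. by rewrite /mv_oplus inordK //; lia. Qed.

Lemma val_odot x y : nat_of_ord (mv_odot n x y) = x + y - m.
Proof.
have := ltn_ord x; have := ltn_ord y.
by rewrite /mv_odot val_neg val_oplus !val_neg; lia.
Qed.

Lemma val_join x y : nat_of_ord (mv_join n x y) = maxn x y.
Proof.
have := ltn_ord x; have := ltn_ord y.
by rewrite /mv_join val_oplus val_odot val_neg; lia.
Qed.

Lemma val_meet x y : nat_of_ord (mv_meet n x y) = minn x y.
Proof.
have := ltn_ord x; have := ltn_ord y.
by rewrite /mv_meet val_odot val_oplus val_neg; lia.
Qed.

Lemma mv_leP x y : mv_le n x y <-> x <= y.
Proof.
have := ltn_ord x; have := ltn_ord y; rewrite /mv_le; split.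
- by move/(congr1 val); rewrite /= val_oplus val_neg ?val_one; lia.
- by move=> le_xy; apply: val_inj; rewrite /= val_oplus val_neg ?val_one; lia.
Qed.

Lemma val_dxy (p : Ln n * Ln n) z :
  nat_of_ord (dxy n p z) = if nat_of_ord z == m then nat_of_ord p.2 else p.1 + z - m.
Proof.
have -> : (nat_of_ord z == m) = (z == mv_one n)
  by apply/eqP/eqP => [z_top|->]; first exact: val_inj.
by rewrite /dxy; case: eqP => _ //; rewrite val_odot.
Qed.

Lemma inAP (p : Ln n * Ln n) : inA n p <-> p.2 <= p.1 /\ 0 < p.1.
Proof.
case: p => a b; rewrite /inA mv_leP /=; split.
- case=> le_ba nz; split=> //; rewrite lt0n; apply/negP => /eqP a0.
  by apply: nz; congr pair; apply: val_inj => /=; lia.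
- by case=> le_ba a_gt0; split=> // -[a0 _]; move: a_gt0; rewrite a0.
Qed.

End ChainArithmetic.

Section Derivations.
Variable n : nat.
Local Notation m := n.-1.
Implicit Types (x y z : Ln n) (d : Ln n -> Ln n).

Lemma dxy_is_der (p : Ln n * Ln n) : p.2 <= p.1 -> is_der n (dxy n p).
Proof.
case: p => a b /= le_ba x y; apply: val_inj => /=.
have := ltn_ord x; have := ltn_ord y; have := ltn_ord a; have := ltn_ord b.
rewrite val_join !val_odot !val_dxy /= val_odot.
by do ! case: eqP => /= ?; lia.
Qed.

Lemma is_der_ext d d' : d =1 d' -> is_der n d' -> is_der n d.
Proof. by move=> eq_dd' hd x y; rewrite !eq_dd'; apply: hd. Qed.

Section Classification.
Hypothesis m_gt0 : 0 < m.
Variable d : Ln n -> Ln n.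
Hypothesis d_der : is_der n d.

Let c : Ln n := inord m.-1.
Let val_c : nat_of_ord c = m.-1.
Proof. by rewrite inordK //; lia. Qed.
Let e := nat_of_ord (d c).

Lemma der_zero : nat_of_ord (d (mv_zero n)) = 0.
Proof.
have := d_der (mv_zero n) (mv_zero n).
have -> : mv_odot n (mv_zero n) (mv_zero n) = mv_zero n.
  by apply: val_inj; rewrite /= val_odot.
move/(congr1 val); rewrite /= val_join !val_odot val_zero.
by have := ltn_ord (d (mv_zero n)); lia.
Qed.

(* Below the top, d is determined by e: d((m-j)/m) = e + 1 - j.
   The point (m-j-1)/m is (m-j)/m (.) c, so induction on j applies. *)
Lemma der_below_top j : 0 < j <= m -> nat_of_ord (d (inord (m - j))) = e.+1 - j.
Proof.
elim: j => [|j IH] j_bnd; first by lia.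
have [->|j_gt0] := posnP j; first by rewrite !subn1.
have -> : (inord (m - j.+1) : Ln n) = mv_odot n (inord (m - j)) c.
  by apply: val_inj; rewrite /= val_odot val_c !inordK; lia.
by rewrite d_der val_join !val_odot IH ?val_c ?inordK; lia.
Qed.

(* Taking j = m and d(0) = 0: e + 1 <= m. *)
Lemma der_coatom_bound : e.+1 <= m.
Proof.
have := @der_below_top m; rewrite subnn m_gt0 leqnn => /(_ isT).
have -> : (inord 0 : Ln n) = mv_zero n by apply: val_inj; rewrite /= inordK.
by rewrite der_zero; lia.
Qed.

(* From d(c) = d(1 (.) c) = max(d(1) (.) c, e): d(1) <= e + 1. *)
Lemma der_top_bound : nat_of_ord (d (mv_one n)) <= e.+1.
Proof.
have := d_der (mv_one n) c.
have -> : mv_odot n (mv_one n) c = c.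
  by apply: val_inj; rewrite /= val_odot val_one val_c; lia.
by move/(congr1 val); rewrite /= val_join !val_odot val_one val_c -/e; lia.
Qed.

Lemma der_classification : exists2 p, inA n p & d =1 dxy n p.
Proof.
have e_lt := der_coatom_bound.
exists (inord e.+1, d (mv_one n)).
  by apply/inAP; rewrite /= inordK //; have := der_top_bound; lia.
move=> z; apply: val_inj; rewrite /= val_dxy /= inordK //.
have := ltn_ord z; case: eqP => [z_top _|z_ntop z_le].
  by congr (nat_of_ord (d _)); apply: val_inj.
have -> : z = inord (m - (m - z)) by apply: val_inj; rewrite /= inordK; lia.
by rewrite der_below_top ?inordK; lia.
Qed.

End Classification.

Section Parametrization.
Hypothesis m_gt0 : 0 < m.

Lemma dxy_at_coatom (p : Ln n * Ln n) :
  nat_of_ord (dxy n p (inord m.-1)) = p.1 - 1.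
Proof. by rewrite val_dxy inordK; [case: eqP; lia | lia]. Qed.

Lemma dxy_inj p q : inA n p -> inA n q -> dxy n p =1 dxy n q -> p = q.
Proof.
case: p q => [a b] [a' b'] /inAP /= [_ a_gt0] /inAP /= [_ a'_gt0] eq_pq.
move: (congr1 (@nat_of_ord _) (eq_pq (inord m.-1))).
move: (congr1 (@nat_of_ord _) (eq_pq (mv_one n))).
rewrite !dxy_at_coatom !val_dxy /= eqxx => eq_b eq_a.
by congr pair; apply: val_inj => //=; lia.
Qed.

Lemma dxy_le p q : inA n p -> inA n q ->
  pair_le n p q <-> der_le n (dxy n p) (dxy n q).
Proof.
case: p q => [a b] [a' b'] /inAP /= [_ a_gt0] /inAP /= [_ a'_gt0].
rewrite /pair_le /der_le /= !mv_leP; split.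
- by case=> le_a le_b z; rewrite mv_leP !val_dxy /=; case: eqP; lia.
- move=> le_d; move: (le_d (inord m.-1)) (le_d (mv_one n)).
  by rewrite !mv_leP !dxy_at_coatom !val_dxy /= eqxx; lia.
Qed.

End Parametrization.

Lemma dxy_join p q z : dxy n (pair_join n p q) z = pjoin n (dxy n p) (dxy n q) z.
Proof.
by apply: val_inj; rewrite /pjoin /= val_join !val_dxy /= !val_join; case: eqP; lia.
Qed.

Lemma dxy_meet p q z : dxy n (pair_meet n p q) z = pmeet n (dxy n p) (dxy n q) z.
Proof.
by apply: val_inj; rewrite /pmeet /= val_meet !val_dxy /= !val_meet; case: eqP; lia.
Qed.

Lemma inA_join p q : inA n p -> inA n q -> inA n (pair_join n p q).
Proof. by rewrite !inAP /= !val_join; lia. Qed.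

Lemma inA_meet p q : inA n p -> inA n q -> inA n (pair_meet n p q).
Proof. by rewrite !inAP /= !val_meet; lia. Qed.

Lemma is_der_pjoin_pmeet d1 d2 : 0 < m -> is_der n d1 -> is_der n d2 ->
  is_der n (pjoin n d1 d2) /\ is_der n (pmeet n d1 d2).
Proof.
move=> m_gt0 d1_der d2_der.
have [p pA eq1] := der_classification m_gt0 d1_der.
have [q qA eq2] := der_classification m_gt0 d2_der.
split.
- apply: (@is_der_ext _ (dxy n (pair_join n p q))).
    by move=> z; rewrite dxy_join /pjoin eq1 eq2.
  by apply: dxy_is_der; have /inAP[] := inA_join pA qA.
- apply: (@is_der_ext _ (dxy n (pair_meet n p q))).
    by move=> z; rewrite dxy_meet /pmeet eq1 eq2.
  by apply: dxy_is_der; have /inAP[] := inA_meet pA qA.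
Qed.

Lemma pjoin_lub d1 d2 :
  [/\ der_le n d1 (pjoin n d1 d2), der_le n d2 (pjoin n d1 d2) &
      forall d, der_le n d1 d -> der_le n d2 d -> der_le n (pjoin n d1 d2) d].
Proof.
split=> [z|z|d le1 le2 z]; rewrite ?mv_leP /pjoin val_join; try lia.
by move: (le1 z) (le2 z); rewrite !mv_leP; lia.
Qed.

Lemma pmeet_glb d1 d2 :
  [/\ der_le n (pmeet n d1 d2) d1, der_le n (pmeet n d1 d2) d2 &
      forall d, der_le n d d1 -> der_le n d d2 -> der_le n d (pmeet n d1 d2)].
Proof.
split=> [z|z|d le1 le2 z]; rewrite ?mv_leP /pmeet val_meet; try lia.
by move: (le1 z) (le2 z); rewrite !mv_leP; lia.
Qed.

End Derivations.

Theorem theorem5p6 (n : nat) (hn : 2 <= n) :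
  (forall d1 d2 : Ln n -> Ln n, is_der n d1 -> is_der n d2 ->
     [/\ is_der n (pjoin n d1 d2) /\ is_der n (pmeet n d1 d2),
         der_le n d1 (pjoin n d1 d2) /\ der_le n d2 (pjoin n d1 d2),
         der_le n (pmeet n d1 d2) d1 /\ der_le n (pmeet n d1 d2) d2,
         (forall d, is_der n d -> der_le n d1 d -> der_le n d2 d ->
            der_le n (pjoin n d1 d2) d) &
         (forall d, is_der n d -> der_le n d d1 -> der_le n d d2 ->
            der_le n d (pmeet n d1 d2))]) /\
  (forall p, inA n p -> is_der n (dxy n p)) /\
  (forall p q, inA n p -> inA n q -> (forall z, dxy n p z = dxy n q z) -> p = q) /\
  (forall d, is_der n d -> exists2 p, inA n p & forall z, d z = dxy n p z) /\
  (forall p q, inA n p -> inA n q -> (pair_le n p q <-> der_le n (dxy n p) (dxy n q))) /\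
  (forall p q, inA n p -> inA n q ->
     [/\ inA n (pair_join n p q), inA n (pair_meet n p q),
         (forall z, dxy n (pair_join n p q) z = pjoin n (dxy n p) (dxy n q) z) &
         (forall z, dxy n (pair_meet n p q) z = pmeet n (dxy n p) (dxy n q) z)]).
Proof.
have m_gt0 : 0 < n.-1 by lia.
split.
  move=> d1 d2 d1_der d2_der.
  have [join_ub1 join_ub2 join_least] := pjoin_lub d1 d2.
  have [meet_lb1 meet_lb2 meet_greatest] := pmeet_glb d1 d2.
  split=> //; first exact: is_der_pjoin_pmeet.
  - by move=> d _; apply: join_least.
  - by move=> d _; apply: meet_greatest.
split; first by move=> p /inAP[le_p _]; apply: dxy_is_der.
split; first exact: dxy_inj.
split; first by move=> d; apply: der_classification.
split; first exact: dxy_le.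
move=> p q pA qA; split; [exact: inA_join | exact: inA_meet | exact: dxy_join | exact: dxy_meet].
Qed.
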